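(* The functor $\mathrm{Max}$ from the category of unital C*-algebras (with unital *-homomorphisms) to the category of unital involutive quantales (with unital involutive homomorphisms) does not preserve products.
   Context: A quantale is a complete lattice with an associative multiplication distributing over arbitrary joins in both variables; it is unital if it has a multiplicative unit; an involutive quantale has an involution $^*$ with $a^{**}=a$, $(a\cdot b)^*=b^*\cdot a^*$, $(\bigvee a_i)^*=\bigvee a_i^*$; morphisms preserve joins, multiplication, unit and involution. For a unital C*-algebra $A$, $\mathrm{Max}\,A$ is the quantale of all closed linear subspaces of $A$ with join $\bigvee_i M_i=\overline{\sum_i M_i}$, product $M\cdot N=$ closure of the linear span of $\{ab:a\in M,b\in N\}$, involution $M^*=\{a^*:a\in M\}$, and unit the subspace spanned by the identity. For a unital *-homomorphism $f:A\to B$, $\mathrm{Max}\,f(M)=\overline{f[M]}$. *)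

From HB Require Import structures.
From mathcomp Require Import all_boot all_order all_algebra.
From mathcomp Require Import reals.
From mathcomp Require Import complex.

Set Implicit Arguments.
Unset Strict Implicit.
Unset Printing Implicit Defensive.

Import Order.TTheory GRing.Theory Num.Theory.
Local Open Scope ring_scope.

(* Unital C*-algebras over the complex numbers C = R[i], R a real-number     *)
(* type.  The underlying complex vector space is a MathComp lmodType over    *)
(* R[i] (this allows the zero algebra); multiplication, unit, involution and  *)
(* norm are explicit fields together with the usual axioms.                  *)

Record cstar (R : realType) := CStar {
  cs_car :> lmodType R[i];
  cs_mul : cs_car -> cs_car -> cs_car;
  cs_one : cs_car;
  cs_star : cs_car -> cs_car;
  cs_norm : cs_car -> R;
  cs_mulA : forall x y z, cs_mul x (cs_mul y z) = cs_mul (cs_mul x y) z;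
  cs_mul1l : forall x, cs_mul cs_one x = x;
  cs_mul1r : forall x, cs_mul x cs_one = x;
  cs_mulDl : forall x y z, cs_mul (x + y) z = cs_mul x z + cs_mul y z;
  cs_mulDr : forall x y z, cs_mul x (y + z) = cs_mul x y + cs_mul x z;
  cs_scalerAl : forall (a : R[i]) x y, a *: cs_mul x y = cs_mul (a *: x) y;
  cs_scalerAr : forall (a : R[i]) x y, a *: cs_mul x y = cs_mul x (a *: y);
  cs_starK : forall x, cs_star (cs_star x) = x;
  cs_starD : forall x y, cs_star (x + y) = cs_star x + cs_star y;
  cs_starZ : forall (a : R[i]) x, cs_star (a *: x) = conjc a *: cs_star x;
  cs_starM : forall x y, cs_star (cs_mul x y) = cs_mul (cs_star y) (cs_star x);
  cs_norm_ge0 : forall x, 0 <= cs_norm x;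
  cs_norm_eq0 : forall x, cs_norm x = 0 -> x = 0;
  cs_normD : forall x y, cs_norm (x + y) <= cs_norm x + cs_norm y;
  cs_normZ : forall (a : R[i]) x, cs_norm (a *: x) = Normc.normc a * cs_norm x;
  cs_normM : forall x y, cs_norm (cs_mul x y) <= cs_norm x * cs_norm y;
  cs_cstar : forall x, cs_norm (cs_mul (cs_star x) x) = cs_norm x ^+ 2;
  cs_complete : forall u : nat -> cs_car,
    (forall e : R, 0 < e -> exists N : nat, forall m n : nat,
        (N <= m)%N -> (N <= n)%N -> cs_norm (u m - u n) < e) ->
    exists l : cs_car, forall e : R, 0 < e -> exists N : nat, forall n : nat,
        (N <= n)%N -> cs_norm (u n - l) < e
}.

Arguments cs_mul {R} c _ _.
Arguments cs_one {R} c.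
Arguments cs_star {R} c _.
Arguments cs_norm {R} c _.

Definition cstar_hom (R : realType) (A B : cstar R) (f : A -> B) : Prop :=
  [/\ forall x y, f (x + y) = f x + f y,
      forall (a : R[i]) x, f (a *: x) = a *: f x,
      forall x y, f (cs_mul A x y) = cs_mul B (f x) (f y),
      f (cs_one A) = cs_one B &
      forall x, f (cs_star A x) = cs_star B (f x)].

Definition is_cstar_product (R : realType) (I : Type) (A : I -> cstar R)
    (P : cstar R) (p : forall i, P -> A i) : Prop :=
  (forall i, cstar_hom (p i)) /\
  forall (B : cstar R) (f : forall i, B -> A i),
    (forall i, cstar_hom (f i)) ->
    exists! g : B -> P, cstar_hom g /\ forall i, p i \o g = f i.

Section MaxDef.
Variables (R : realType) (A : cstar R).

Definition closed_subspace (M : A -> Prop) : Prop :=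
  [/\ M 0,
      forall x y, M x -> M y -> M (x + y),
      forall (a : R[i]) x, M x -> M (a *: x) &
      forall x, (forall e : R, 0 < e -> exists2 m, M m & cs_norm A (x - m) < e)
                -> M x].

Definition clspan (S : A -> Prop) : A -> Prop :=
  fun x => forall M, closed_subspace M -> (forall y, S y -> M y) -> M x.

Lemma clspan_closed S : closed_subspace (clspan S).
Proof.
split.
- by move=> M [] ?.
- by move=> x y Hx Hy M HM HS; case: (HM) => _ HD _ _; apply: HD; [apply: Hx|apply: Hy].
- by move=> a x Hx M HM HS; case: (HM) => _ _ HZ _; apply: HZ; apply: Hx.
- move=> x Hx M HM HS; case: (HM) => _ _ _ HC; apply: HC => e /Hx [m Hm Hme].
  by exists m => //; apply: Hm.
Qed.

Definition Max := {M : A -> Prop | closed_subspace M}.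

Definition Max_gen (S : A -> Prop) : Max := exist _ (clspan S) (clspan_closed S).

Definition Max_le (M N : Max) : Prop := forall x, sval M x -> sval N x.

Definition Max_join (F : Max -> Prop) : Max :=
  Max_gen (fun x => exists2 M, F M & sval M x).

Definition Max_mul (M N : Max) : Max :=
  Max_gen (fun x => exists a b, [/\ sval M a, sval N b & x = cs_mul A a b]).

Definition Max_one : Max := Max_gen (fun x => x = cs_one A).

Definition Max_inv (M : Max) : Max :=
  Max_gen (fun x => exists2 a, sval M a & x = cs_star A a).

End MaxDef.

Definition Max_map (R : realType) (A B : cstar R) (f : A -> B) (M : Max A) : Max B :=
  Max_gen (fun y => exists2 x, sval M x & y = f x).

Record qops := QOps {
  q_car :> Type;
  q_le : q_car -> q_car -> Prop;
  q_join : (q_car -> Prop) -> q_car;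
  q_mul : q_car -> q_car -> q_car;
  q_one : q_car;
  q_inv : q_car -> q_car
}.

Definition q_image (Q Q' : Type) (h : Q -> Q') (S : Q -> Prop) : Q' -> Prop :=
  fun y => exists2 x, S x & y = h x.

Definition is_uiquantale (Q : qops) : Prop :=
  let le := @q_le Q in let join := @q_join Q in let mul := @q_mul Q in
  let one := @q_one Q in let inv := @q_inv Q in
  [/\ (forall x, le x x),
      (forall x y, le x y -> le y x -> x = y),
      (forall x y z, le x y -> le y z -> le x z),
      (forall S x, S x -> le x (join S)) &
      (forall S z, (forall x, S x -> le x z) -> le (join S) z)] /\
  [/\ (forall x y z, mul x (mul y z) = mul (mul x y) z),
      (forall a S, mul a (join S) = join (q_image (Q:=Q) (Q':=Q) (mul a) S)) &
      (forall a S, mul (join S) a = join (q_image (Q:=Q) (Q':=Q) (fun x => mul x a) S))] /\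
  (forall x, mul one x = x /\ mul x one = x) /\
  [/\ forall x, inv (inv x) = x,
      forall x y, inv (mul x y) = mul (inv y) (inv x) &
      forall S, inv (join S) = join (q_image (Q:=Q) (Q':=Q) inv S)].

Definition qhom (Q Q' : qops) (h : Q -> Q') : Prop :=
  [/\ forall S, h (q_join S) = q_join (q_image h S),
      forall x y, h (q_mul x y) = q_mul (h x) (h y),
      h (q_one Q) = q_one Q' &
      forall x, h (q_inv x) = q_inv (h x)].

Definition is_quantale_product (I : Type) (X : I -> qops) (P : qops)
    (p : forall i, P -> X i) : Prop :=
  (forall i, qhom (p i)) /\
  forall (Q : qops), is_uiquantale Q ->
  forall g : forall i, Q -> X i, (forall i, qhom (g i)) ->
    exists! h : Q -> P, qhom h /\ forall i, p i \o h = g i.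

Definition MaxQ (R : realType) (A : cstar R) : qops :=
  QOps (@Max_le R A) (@Max_join R A) (@Max_mul R A) (Max_one A) (@Max_inv R A).

Definition Max_preserves_products (R : realType) : Prop :=
  forall (I : Type) (A : I -> cstar R) (P : cstar R) (p : forall i, P -> A i),
    @is_cstar_product R I A P p ->
    @is_quantale_product I (fun i => MaxQ (A i)) (MaxQ P)
      (fun i => @Max_map R P (A i) (p i)).

From mathcomp Require Import all_boot all_order all_algebra.
From mathcomp Require Import reals complex.
From mathcomp Require Import boolp classical_sets topology normedtype.

Set Implicit Arguments.
Unset Strict Implicit.
Unset Printing Implicit Defensive.
Import Order.TTheory GRing.Theory Num.Theory numFieldNormedType.Exports.
Local Open Scope ring_scope.
Local Open Scope classical_set_scope.

(* Max C is the two-element quantale {0, C}, i.e. the quantale Prop.  If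
   Max (C x C) were the product of two copies of Max C, the quantale
   Prop x Prop with its two projections would factor through a homomorphism h
   into Max (C x C).  In Prop x Prop the unit (True, True) is the top, so
   h (True, False) lies below the unit of Max (C x C), the diagonal line.  Its
   second projection is 0, hence h (True, False) = 0, yet its first projection
   must be C. *)

Section NormComplete.
Variables (R : numDomainType) (V : zmodType).

Definition norm_cauchy (nrm : V -> R) (u : nat -> V) :=
  forall e : R, 0 < e -> exists N : nat, forall m n : nat,
    (N <= m)%N -> (N <= n)%N -> nrm (u m - u n) < e.

Definition norm_cvg_to (nrm : V -> R) (u : nat -> V) (l : V) :=
  forall e : R, 0 < e -> exists N : nat, forall n : nat,
    (N <= n)%N -> nrm (u n - l) < e.

Definition norm_complete (nrm : V -> R) :=
  forall u, norm_cauchy nrm u -> exists l, norm_cvg_to nrm u l.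

End NormComplete.

Lemma norm_cauchy_contraction (R : numDomainType) (V W : zmodType)
    (nV : V -> R) (nW : W -> R) (f : V -> W) (u : nat -> V) :
  (forall x y, nW (f x - f y) <= nV (x - y)) ->
  norm_cauchy nV u -> norm_cauchy nW (f \o u).
Proof.
move=> f_le Hu e /Hu[N HN]; exists N => m n Nm Nn.
exact: le_lt_trans (f_le _ _) (HN m n Nm Nn).
Qed.

Lemma max_sqr (R : realDomainType) (x y : R) :
  0 <= x -> 0 <= y -> Num.max (x ^+ 2) (y ^+ 2) = Num.max x y ^+ 2.
Proof.
move=> x0 y0; case: (leP x y) => xy.
  by rewrite max_r // ler_pXn2r ?nnegrE.
by rewrite max_l // ler_pXn2r ?nnegrE // ltW.
Qed.

Section Completeness.
Variable R : realType.
Local Notation normc := (@Normc.normc R).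

Lemma real_norm_complete : norm_complete (Num.norm : R -> R).
Proof.
move=> u Hu.
have /cauchy_cvgP/cvg_ex[l ul] : cauchy (u @ \oo).
  apply/cauchy_exP => e /Hu[N HN]; exists (u N); exists N => // n /= Nn.
  by rewrite /ball /= HN.
move/cvgrPdist_lt: ul => ul; exists l => e /ul[N _ HN]; exists N => n /HN.
by rewrite distrC.
Qed.

Lemma normc_ge0 (x : R[i]) : 0 <= normc x.
Proof. by case: x => a b; rewrite sqrtr_ge0. Qed.

Lemma Re_le_normc (x : R[i]) : `|complex.Re x| <= normc x.
Proof.
case: x => a b /=; rewrite -sqrtr_sqr; apply: ler_wsqrtr.
by rewrite lerDl sqr_ge0.
Qed.

Lemma Im_le_normc (x : R[i]) : `|complex.Im x| <= normc x.
Proof.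
case: x => a b /=; rewrite -sqrtr_sqr; apply: ler_wsqrtr.
by rewrite lerDr sqr_ge0.
Qed.

Lemma normc_le_Re_Im (x : R[i]) : normc x <= `|complex.Re x| + `|complex.Im x|.
Proof.
case: x => a b.
have -> : (a +i* b)%C = (a +i* 0)%C + (0 +i* b)%C.
  by apply/eqP; rewrite eq_complex /= addr0 add0r !eqxx.
apply: le_trans (le_normcD _ _) _.
by rewrite /= expr0n /= addr0 add0r !sqrtr_sqr addr0 add0r.
Qed.

Lemma normc_complete : norm_complete normc.
Proof.
move=> u Hu.
have [a ua] : exists a, norm_cvg_to Num.norm (@complex.Re R \o u) a.
  apply/real_norm_complete/(norm_cauchy_contraction _ Hu) => x y.
  by rewrite -raddfB Re_le_normc.
have [b ub] : exists b, norm_cvg_to Num.norm (@complex.Im R \o u) b.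
  apply/real_norm_complete/(norm_cauchy_contraction _ Hu) => x y.
  by rewrite -raddfB Im_le_normc.
exists (a +i* b)%C => e e0.
have e20 : 0 < e / 2 by rewrite divr_gt0.
have [Na HNa] := ua _ e20; have [Nb HNb] := ub _ e20.
exists (maxn Na Nb) => n; rewrite geq_max => /andP[/HNa an /HNb bn].
apply: le_lt_trans (normc_le_Re_Im _) _.
by rewrite [e]splitr !raddfB ltrD.
Qed.

Lemma prod_norm_complete (V W : zmodType) (nV : V -> R) (nW : W -> R) :
  norm_complete nV -> norm_complete nW ->
  norm_complete (fun x : V * W => Num.max (nV x.1) (nW x.2)).
Proof.
move=> cV cW u Hu.
have [l1 ul1] : exists l1, norm_cvg_to nV (fst \o u) l1.
  by apply/cV/(norm_cauchy_contraction _ Hu) => x y; rewrite le_max lexx.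
have [l2 ul2] : exists l2, norm_cvg_to nW (snd \o u) l2.
  by apply/cW/(norm_cauchy_contraction _ Hu) => x y; rewrite le_max lexx orbT.
exists (l1, l2) => e e0.
have [N1 HN1] := ul1 e e0; have [N2 HN2] := ul2 e e0.
exists (maxn N1 N2) => n; rewrite geq_max => /andP[/HN1 n1 /HN2 n2].
by rewrite gt_max n1 n2.
Qed.

End Completeness.

Section CStarAlgebras.
Variable R : realType.
Local Notation normc := (@Normc.normc R).

Lemma normc_conj (x : R[i]) : normc x^*%C = normc x.
Proof. by case: x => a b /=; rewrite sqrrN. Qed.

Definition complex_cstar : cstar R.
Proof.
refine (@CStar R R[i]^o *%R 1 conjc normc
  _ _ _ _ _ _ _ _ _ _ _ _ _ _ _ _ _ (@normc_complete R)).
- exact: mulrA.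
- exact: mul1r.
- exact: mulr1.
- exact: mulrDl.
- exact: mulrDr.
- exact: mulrA.
- exact: mulrCA.
- exact: conjcK.
- exact: rmorphD.
- exact: rmorphM.
- by move=> x y; rewrite rmorphM mulrC.
- exact: normc_ge0.
- exact: Normc.eq0_normc.
- exact: le_normcD.
- exact: Normc.normcM.
- by move=> x y; rewrite Normc.normcM.
- by move=> x; rewrite Normc.normcM normc_conj.
Defined.

Lemma cs_normN (A : cstar R) (x : A) : cs_norm A (- x) = cs_norm A x.
Proof. by rewrite -scaleN1r cs_normZ normcN Normc.normc1 mul1r. Qed.

Section Product.
Variables A B : cstar R.

Definition prod_cstar : cstar R.
Proof.
refine (@CStar R (A * B)%type
  (fun x y => (cs_mul A x.1 y.1, cs_mul B x.2 y.2))
  (cs_one A, cs_one B)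
  (fun x => (cs_star A x.1, cs_star B x.2))
  (fun x => Num.max (cs_norm A x.1) (cs_norm B x.2))
  _ _ _ _ _ _ _ _ _ _ _ _ _ _ _ _ _
  (prod_norm_complete (@cs_complete R A) (@cs_complete R B))).
- by move=> x y z; rewrite /= !cs_mulA.
- by move=> [x1 x2]; rewrite /= !cs_mul1l.
- by move=> [x1 x2]; rewrite /= !cs_mul1r.
- by move=> x y z; rewrite /= !cs_mulDl.
- by move=> x y z; rewrite /= !cs_mulDr.
- by move=> a x y; rewrite /= -!cs_scalerAl.
- by move=> a x y; rewrite /= -!cs_scalerAr.
- by move=> [x1 x2]; rewrite /= !cs_starK.
- by move=> x y; rewrite /= !cs_starD.
- by move=> a x; rewrite /= !cs_starZ.
- by move=> x y; rewrite /= !cs_starM.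
- by move=> x; rewrite le_max cs_norm_ge0.
- move=> [x1 x2] /eqP; rewrite eq_le ge_max => /andP[/andP[x1_le0 x2_le0] _].
  by congr pair; apply: cs_norm_eq0; apply/eqP; rewrite eq_le cs_norm_ge0 andbT.
- move=> x y; rewrite ge_max; apply/andP; split; apply: le_trans (cs_normD _ _) _;
    by apply: lerD; rewrite le_max lexx ?orbT.
- by move=> a x; rewrite /= !cs_normZ maxr_pMr ?normc_ge0.
- move=> x y; rewrite ge_max; apply/andP; split; apply: le_trans (cs_normM _ _) _;
    by apply: ler_pM; rewrite ?cs_norm_ge0 ?le_max ?lexx ?orbT.
- by move=> x; rewrite /= !cs_cstar max_sqr ?cs_norm_ge0.
Defined.

End Product.

Lemma prod_cstar_is_product (A : cstar R) :
  @is_cstar_product R bool (fun=> A) (prod_cstar A A)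
    (fun b x => if b then x.1 else x.2).
Proof.
split; first by case; split.
move=> B f f_hom; exists (fun x => (f true x, f false x)); split.
- split; last by case.
  have [D1 Z1 M1 O1 S1] := f_hom true; have [D2 Z2 M2 O2 S2] := f_hom false.
  by split=> [x y|a x|x y||x]; rewrite /= ?D1 ?D2 ?Z1 ?Z2 ?M1 ?M2 ?O1 ?O2 ?S1 ?S2.
- move=> g [_ g_proj]; apply/funext => x.
  by rewrite -(g_proj true) -(g_proj false) /=; case: (g x).
Qed.

End CStarAlgebras.

Lemma q_image_comp (Q1 Q2 Q3 : Type) (f : Q1 -> Q2) (g : Q2 -> Q3) S :
  q_image g (q_image f S) = q_image (g \o f) S.
Proof.
apply/funext => z; apply/propext; split.
- by case=> _ [x Sx ->] ->; exists x.
- by case=> x Sx ->; exists (f x) => //; exists x.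
Qed.

Lemma qhom_comp (Q1 Q2 Q3 : qops) (f : Q1 -> Q2) (g : Q2 -> Q3) :
  qhom f -> qhom g -> qhom (g \o f).
Proof.
case=> fJ fM f1 fI [gJ gM g1 gI].
by split=> [S|x y||x] /=; rewrite ?fJ ?gJ ?q_image_comp ?fM ?gM ?f1 ?g1 ?fI ?gI.
Qed.

Definition propQ : qops :=
  @QOps Prop (fun P Q => P -> Q) (fun S => exists P, S P /\ P) and True id.

Lemma propQ_uiquantale : is_uiquantale propQ.
Proof.
split; [|split; [|split]].
- split.
  + by move=> P.
  + by move=> P Q PQ QP; apply/propext.
  + by move=> P Q T PQ QT /PQ/QT.
  + by move=> S P SP p; exists P.
  + by move=> S T ST [P [/ST]].
- split.
  + by move=> P Q T /=; apply/propext; tauto.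
  + move=> P S; apply/propext; split=> [[p [Q [SQ q]]]|[_ [[Q SQ ->] [p q]]]].
      by exists (P /\ Q); split=> //; exists Q.
    by split=> //; exists Q.
  + move=> P S; apply/propext; split=> [[[Q [SQ q]] p]|[_ [[Q SQ ->] [q p]]]].
      by exists (Q /\ P); split=> //; exists Q.
    by split=> //; exists Q.
- by move=> P; split; apply/propext => /=; tauto.
- split=> [//|P Q|S]; apply/propext => /=; first by tauto.
  split=> [[P [SP p]]|[_ [[P SP ->] p]]]; last by exists P.
  by exists P; split=> //; exists P.
Qed.

Definition prodQ (Q1 Q2 : qops) : qops :=
  @QOps (Q1 * Q2)%type
    (fun x y => q_le x.1 y.1 /\ q_le x.2 y.2)
    (fun S => (q_join (q_image fst S), q_join (q_image snd S)))
    (fun x y => (q_mul x.1 y.1, q_mul x.2 y.2))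
    (q_one Q1, q_one Q2)
    (fun x => (q_inv x.1, q_inv x.2)).

Lemma qhom_fst (Q1 Q2 : qops) : qhom (fst : prodQ Q1 Q2 -> Q1).
Proof. by []. Qed.

Lemma qhom_snd (Q1 Q2 : qops) : qhom (snd : prodQ Q1 Q2 -> Q2).
Proof. by []. Qed.

Lemma prodQ_uiquantale (Q1 Q2 : qops) :
  is_uiquantale Q1 -> is_uiquantale Q2 -> is_uiquantale (prodQ Q1 Q2).
Proof.
move=> [[refl1 anti1 trans1 ub1 lub1] [[mulA1 mulJr1 mulJl1] [one1 [invK1 invM1 invJ1]]]].
move=> [[refl2 anti2 trans2 ub2 lub2] [[mulA2 mulJr2 mulJl2] [one2 [invK2 invM2 invJ2]]]].
split; [|split; [|split]].
- split.
  + by move=> x; split.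
  + move=> [x1 x2] [y1 y2] [/= le1 le2] [/= ge1 ge2].
    by rewrite (anti1 _ _ le1 ge1) (anti2 _ _ le2 ge2).
  + by move=> x y z [le1 le2] [le1' le2']; split; [apply: trans1 le1'|apply: trans2 le2'].
  + by move=> S x Sx; split; [apply: ub1|apply: ub2]; exists x.
  + by move=> S z Sz; split; [apply: lub1|apply: lub2] => _ [x /Sz[]] ? ? ->.
- split.
  + by move=> x y z; rewrite /= mulA1 mulA2.
  + by move=> a S; rewrite /= mulJr1 mulJr2 !q_image_comp.
  + by move=> a S; rewrite /= mulJl1 mulJl2 !q_image_comp.
- move=> [x1 x2]; have [l1 r1] := one1 x1; have [l2 r2] := one2 x2.
  by rewrite /= l1 r1 l2 r2.
- split.
  + by move=> [x1 x2]; rewrite /= invK1 invK2.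
  + by move=> x y; rewrite /= invM1 invM2.
  + by move=> S; rewrite /= invJ1 invJ2 !q_image_comp.
Qed.

Lemma prodQ_prop_join_one (x : prodQ propQ propQ) :
  q_join (fun y => y = x \/ y = q_one (prodQ propQ propQ)) = q_one (prodQ propQ propQ).
Proof.
by congr pair; apply/propext; split=> // _; exists True; split=> //;
  exists (True, True) => //; right.
Qed.


Section MaxTheory.
Variable R : realType.

Lemma sub_clspan (A : cstar R) (S : A -> Prop) x : S x -> clspan S x.
Proof. by move=> Sx M _; apply. Qed.

Lemma clspan0 (A : cstar R) (S : A -> Prop) : clspan S 0.
Proof. by case: (clspan_closed S). Qed.

Lemma Max_gen_eq (A : cstar R) (S T : A -> Prop) :
  (forall x, S x -> clspan T x) -> (forall x, T x -> clspan S x) ->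
  Max_gen S = Max_gen T.
Proof.
move=> ST TS; rewrite /Max_gen; apply: eq_exist; apply/funext => x; apply/propext.
by split=> [/(_ _ (clspan_closed T) ST)|/(_ _ (clspan_closed S) TS)].
Qed.

Lemma ker_closed_subspace (A B : cstar R) (f : A -> B) (c : R) :
  0 < c -> {morph f : x y / x + y} -> (forall a, {morph f : x / a *: x}) ->
  (forall x, cs_norm B (f x) <= c * cs_norm A x) ->
  closed_subspace (fun x => f x = 0).
Proof.
move=> c0 fD fZ f_le.
have f0 : f 0 = 0 by rewrite -(scale0r 0) fZ scale0r.
split=> [//|x y fx fy|a x fx|x x_lim].
- by rewrite fD fx fy addr0.
- by rewrite fZ fx scaler0.
apply: cs_norm_eq0; apply/eqP; rewrite eq_le cs_norm_ge0 andbT.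
apply/ler_addgt0Pr => e e0; rewrite add0r.
have [m fm xm] := x_lim (e / c) (divr_gt0 e0 c0).
have -> : f x = f (x - m) by rewrite -[in LHS](subrK m x) fD fm addr0.
by apply: le_trans (f_le _) _; rewrite mulrC -ler_pdivlMr // ltW.
Qed.

Lemma clspan_eq0 (A : cstar R) (S : A -> Prop) x :
  (forall y, S y -> y = 0) -> clspan S x -> x = 0.
Proof.
move=> S0 /(_ _ _ S0); apply.
by apply: (@ker_closed_subspace A A id 1) => // y; rewrite mul1r.
Qed.

Lemma Max_one_prod_diag (A : cstar R) (w : prod_cstar A A) :
  sval (Max_one (prod_cstar A A)) w -> w.1 = w.2.
Proof.
move=> w1; apply/eqP; rewrite -subr_eq0; apply/eqP.
apply: (w1 (fun w : prod_cstar A A => w.1 - w.2 = 0)) => [|_ ->]; last exact: subrr.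
apply: (@ker_closed_subspace (prod_cstar A A) A (fun w => w.1 - w.2) 2) => //.
- by move=> x y; rewrite /= opprD addrACA.
- by move=> a x; rewrite /= scalerBr.
- move=> x; apply: le_trans (cs_normD _ _) _.
  by rewrite cs_normN mulr_natl mulr2n lerD // le_max lexx ?orbT.
Qed.

Lemma qhom_Max_le_join (Q : qops) (A : cstar R) (h : Q -> MaxQ A) S x :
  qhom h -> S x -> Max_le (h x) (h (q_join S)).
Proof.
by case=> hJ _ _ _ Sx z hxz; rewrite hJ; apply: sub_clspan; exists (h x) => //; exists x.
Qed.

Definition Max_of_prop (P : Prop) : Max (complex_cstar R) :=
  Max_gen (fun _ : complex_cstar R => P).

Lemma Max_of_propE P z : sval (Max_of_prop P) z <-> P \/ z = 0.
Proof.
split=> [zP|[p|->]]; [|exact: sub_clspan|exact: clspan0].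
have [p|np] := pselect P; [by left|right].
by apply: clspan_eq0 zP => y /np.
Qed.

Lemma qhom_Max_of_prop : qhom (Q := propQ) (Q' := MaxQ (complex_cstar R)) Max_of_prop.
Proof.
split=> [S|P Q||P]; apply: Max_gen_eq.
- move=> x [P [SP p]]; apply: sub_clspan; exists (Max_of_prop P); first by exists P.
  by apply/Max_of_propE; left.
- move=> x [_ [P SP ->] /Max_of_propE[p|->]]; last exact: clspan0.
  by apply: sub_clspan; exists P.
- move=> x /= [p q]; apply: sub_clspan; exists x, 1.
  by split; [apply/Max_of_propE; left|apply/Max_of_propE; left|rewrite /= mulr1].
- move=> _ [x [y [/Max_of_propE[p|->] /Max_of_propE[q|->] ->]]];
    rewrite /= ?mul0r ?mulr0; by [apply: sub_clspan|apply: clspan0].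
- move=> x _; case: (clspan_closed (fun y : complex_cstar R => y = 1)) => _ _ clZ _.
  by have := clZ x 1 (sub_clspan (erefl _)); rewrite [_ *: _]mulr1.
- by move=> x _; apply: sub_clspan.
- move=> x p; apply: sub_clspan; exists (x^*)%C; last by rewrite /= conjcK.
  by apply/Max_of_propE; left.
- move=> _ [x /Max_of_propE[p|->] ->]; first exact: sub_clspan.
  by rewrite (_ : cs_star _ 0 = 0); [apply: clspan0|apply: conjc0].
Qed.

End MaxTheory.

Theorem theorem5p2 (R : realType) : ~ Max_preserves_products R.
Proof.
pose C := complex_cstar R; pose Q := prodQ propQ propQ.
pose g (b : bool) : Q -> MaxQ C := @Max_of_prop R \o if b then fst else snd.
have g_qhom b : qhom (g b).
  by apply: qhom_comp (qhom_Max_of_prop R); case: b; [apply: qhom_fst|apply: qhom_snd].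
move=> /(_ bool (fun=> C) _ _ (prod_cstar_is_product C)) [_].
move=> /(_ Q (prodQ_uiquantale propQ_uiquantale propQ_uiquantale) g g_qhom).
move=> [h [[h_qhom h_proj] _]].
pose e : Q := (True, False).
have e_le_1 : Max_le (h e) (h (q_one Q)).
  by rewrite -(prodQ_prop_join_one e); apply: qhom_Max_le_join h_qhom (or_introl erefl).
have he_diag w : sval (h e) w -> w.1 = w.2.
  by move/e_le_1; case: h_qhom => _ _ -> _; apply: Max_one_prod_diag.
have he_snd w : sval (h e) w -> w.2 = 0.
  move=> ew; have : sval (g false e) w.2.
    by rewrite -(h_proj false); apply: sub_clspan; exists w.
  by case/Max_of_propE.
have one_in : sval (g true e) 1 by apply/Max_of_propE; left.
rewrite -(h_proj true) in one_in.
suff /eqP : (1 : R[i]) = 0 by rewrite oner_eq0.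
apply: (clspan_eq0 _ one_in) => _ [w ew ->].
by rewrite /= he_diag // he_snd.
Qed.
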